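(* Let $f\in\mathcal A_C$ and $g\in\mathcal{BV}$. Then: (a) $f*g(x)=\int_{-\infty}^\infty f(x-y)g(y)\,dy$ exists for every $x\in\mathbb R$; (b) $f*g=g*f$, i.e. $\int_{-\infty}^\infty f(x-y)g(y)\,dy=\int_{-\infty}^\infty f(y)g(x-y)\,dy$ for all $x\in\mathbb R$; (c) $\|f*g\|_\infty\le \left|\int_{-\infty}^\infty f\right|\inf_{\mathbb R}|g|+\|f\|\,Vg\le \|f\|\,\|g\|_{\mathcal{BV}}$; (d) $f*g\in C^0(\overline{\mathbb R})$ and $\lim_{x\to\pm\infty}f*g(x)=g(\pm\infty)\int_{-\infty}^\infty f$; (f) for all $x,z\in\mathbb R$, $\tau_z(f*g)(x)=(\tau_zf)*g(x)=f*(\tau_zg)(x)$.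
   Context: Notation: $\mathcal D=C_c^\infty(\mathbb R)$ (test functions), $\mathcal D'$ the Schwartz distributions; derivatives of distributions are distributional derivatives. $\overline{\mathbb R}=[-\infty,\infty]$ and $F(\pm\infty)=\lim_{x\to\pm\infty}F(x)$. $C^0(\overline{\mathbb R})$ is the set of continuous $F:\mathbb R\to\mathbb R$ having finite limits at $\pm\infty$; $\|F\|_\infty=\sup_{\mathbb R}|F|$. $\mathcal B_C=\{F\in C^0(\overline{\mathbb R}):F(-\infty)=0\}$. $\mathcal A_C=\{f\in\mathcal D': f=F' \text{ for some } F\in\mathcal B_C\}$; the primitive $F\in\mathcal B_C$ of $f$ is unique, and the continuous primitive integral is $\int_a^bf=F(b)-F(a)$ for $a,b\in\overline{\mathbb R}$. The Alexiewicz norm is $\|f\|=\sup_I|\int_If|$, the supremum over all intervals $I\subset\mathbb R$. A function in $L^1$ is identified with the distribution it defines. $\mathcal{BV}$ is the set of $g:\mathbb R\to\mathbb R$ with finite variation $Vg=\sup\sum_i|g(x_i)-g(y_i)|$ (supremum over finite families of disjoint intervals $(x_i,y_i)$); such $g$ have limits $g(\pm\infty)$, and $\|g\|_{\mathcal{BV}}=|g(-\infty)|+Vg$. For $h\in\mathcal A_C$ with primitive $H$ and $g\in\mathcal{BV}$ the integral of the product is defined by $\int_{-\infty}^\infty hg=H(\infty)g(\infty)-\int_{-\infty}^\infty H\,dg$ (Henstock–Stieltjes integral). For $f\in\mathcal A_C$ with primitive $F$ and $x\in\mathbb R$, $f(x-\cdot)$ denotes the element of $\mathcal A_C$ with primitive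 $y\mapsto F(\infty)-F(x-y)$, and for $g\in\mathcal{BV}$ the convolution is $f*g(x)=\int_{-\infty}^\infty f(x-y)g(y)\,dy$, the product integral of $f(x-\cdot)$ and $g$; $g*f(x)=\int_{-\infty}^\infty f(y)g(x-y)\,dy$ is the product integral of $f$ and $y\mapsto g(x-y)$. Translations: for a function $\phi$, $\tau_z\phi(y)=\phi(y-z)$; for $f\in\mathcal A_C$ with primitive $F$, $\tau_zf$ is the element of $\mathcal A_C$ with primitive $F(\cdot-z)$ (equivalently $\langle\tau_zf,\phi\rangle=\langle f,\tau_{-z}\phi\rangle$). *)

From Stdlib Require Import Reals Lra List ClassicalEpsilon.
Import ListNotations.
Open Scope R_scope.

Definition tends_pinf (f : R -> R) (L : R) : Prop :=
  forall eps, 0 < eps -> exists M, forall x, M < x -> Rabs (f x - L) < eps.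
Definition tends_minf (f : R -> R) (L : R) : Prop :=
  forall eps, 0 < eps -> exists M, forall x, x < M -> Rabs (f x - L) < eps.

(* F(+oo), F(-oo) (meaningful when the limits exist) *)
Definition lim_pinf (f : R -> R) : R := epsilon (inhabits 0) (fun L => tends_pinf f L).
Definition lim_minf (f : R -> R) : R := epsilon (inhabits 0) (fun L => tends_minf f L).

(* supremum / infimum of a set of reals (meaningful when they exist) *)
Definition sup_R (P : R -> Prop) : R := epsilon (inhabits 0) (fun s => is_lub P s).
Definition inf_R (P : R -> Prop) : R := - sup_R (fun y => P (- y)).

(* F in B_C : continuous on R, finite limits at +/- oo, F(-oo) = 0.
   An element f of A_C is represented by its (unique) primitive F in B_C. *)
Definition in_BC (F : R -> R) : Prop :=
  continuity F /\ tends_minf F 0 /\ exists L, tends_pinf F L.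

Inductive ERbar : Type := Fin (r : R) | PInf | MInf.
Definition ext (F : R -> R) (e : ERbar) : R :=
  match e with Fin r => F r | PInf => lim_pinf F | MInf => lim_minf F end.
Definition ERle (a b : ERbar) : Prop :=
  match a, b with
  | MInf, _ => True | _, PInf => True
  | Fin x, Fin y => x <= y
  | _, _ => False end.

(* Alexiewicz norm ||f|| = sup_I |int_I f|, I over all intervals of R,
   int_I f = F(b) - F(a) for I with endpoints a <= b in [-oo,oo]. *)
Definition alex_norm (F : R -> R) : R :=
  sup_R (fun v => exists a b : ERbar, ERle a b /\ v = Rabs (ext F b - ext F a)).

Definition disj_int (p q : R * R) : Prop := snd p <= fst q \/ snd q <= fst p.
Definition var_sum (g : R -> R) (l : list (R * R)) : R :=
  fold_right (fun p s => Rabs (g (fst p) - g (snd p)) + s) 0 l.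
Definition variation_set (g : R -> R) (v : R) : Prop :=
  exists l : list (R * R),
    Forall (fun p => fst p < snd p) l /\ ForallOrdPairs disj_int l /\ v = var_sum g l.
Definition BV (g : R -> R) : Prop :=
  exists M, forall v, variation_set g v -> v <= M.
Definition Var (g : R -> R) : R := sup_R (variation_set g).
Definition BV_norm (g : R -> R) : R := Rabs (lim_minf g) + Var g.

(* A delta-fine tagged division of [a,b]: list of (tag t_i, right endpoint x_i),
   consecutive intervals [x_{i-1}, x_i] with x_0 = a, last x_n = b,
   x_{i-1} <= t_i <= x_i, and [x_{i-1},x_i] inside (t_i - delta t_i, t_i + delta t_i). *)
Fixpoint fine_div (delta : R -> R) (a b : R) (l : list (R * R)) : Prop :=
  match l with
  | [] => a = b
  | (t, x) :: l' =>
      a < x /\ a <= t <= x /\ t - delta t < a /\ x < t + delta t /\ fine_div delta x b l'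
  end.

Fixpoint st_sum (H g : R -> R) (a : R) (l : list (R * R)) : R :=
  match l with
  | [] => 0
  | (t, x) :: l' => H t * (g x - g a) + st_sum H g x l'
  end.

Definition HS_int_ab (H g : R -> R) (a b I : R) : Prop :=
  forall eps, 0 < eps ->
    exists delta : R -> R, (forall x, 0 < delta x) /\
      forall l, fine_div delta a b l -> Rabs (st_sum H g a l - I) < eps.

(* Henstock-Stieltjes integral of H dg over [-oo,oo] equals I
   (as the limit of the integrals over [a,b], a -> -oo, b -> oo; Hake) *)
Definition HS_int (H g : R -> R) (I : R) : Prop :=
  forall eps, 0 < eps -> exists M, forall a b, a < - M -> M < b ->
    exists J, HS_int_ab H g a b J /\ Rabs (J - I) < eps.

Definition HS_integral (H g : R -> R) : R := epsilon (inhabits 0) (fun I => HS_int H g I).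

(* integral of the product h g, h in A_C with primitive H, g in BV:
   int h g = H(oo) g(oo) - int H dg *)
Definition prod_int (H g : R -> R) : R := lim_pinf H * lim_pinf g - HS_integral H g.

(* f*g(x) = int f(x-.) g, where f(x-.) has primitive y |-> F(oo) - F(x-y) *)
Definition conv (F g : R -> R) (x : R) : R :=
  prod_int (fun y => lim_pinf F - F (x - y)) g.
(* g*f(x) = int f(y) g(x-y) dy *)
Definition conv_r (F g : R -> R) (x : R) : R :=
  prod_int F (fun y => g (x - y)).

Definition sup_norm (h : R -> R) : R := sup_R (fun v => exists x, v = Rabs (h x)).

From Stdlib Require Import Reals Lra Lia List ClassicalEpsilon FunctionalExtensionality Classical.
Import ListNotations.
Open Scope R_scope.

(* Write c = F(oo).  Then f*g(x) = c g(oo) - int (c - F(x - .)) dg, and the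
   Henstock-Stieltjes integral of a bounded uniformly continuous function against a
   function of bounded variation exists: Stieltjes sums over two fine divisions differ
   by at most the oscillation of the integrand times Vg, and the tails of the
   variation are small.  Splitting the integral at an arbitrary t0 shows
   |f*g(x) - c g(t0)| <= ||f|| Vg, which gives the bound (c) after optimising t0, and,
   with t0 far out, the limits in (d); continuity follows from uniform continuity of F.
   Commutativity and translation invariance are the changes of variables y -> x - y and
   y -> y + z in the Stieltjes sums. *)

Lemma Rabs_le_inv (a b : R) : Rabs a <= b -> - b <= a <= b.
Proof. unfold Rabs; destruct (Rcase_abs a); intros; lra. Qed.

Lemma Ropp_le_Rabs (x : R) : - x <= Rabs x.
Proof. rewrite <- Rabs_Ropp. apply Rle_abs. Qed.

Lemma eq_epsilon (x y : R) : (forall e, 0 < e -> Rabs (x - y) <= e) -> x = y.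
Proof.
  intros H. apply Rle_antisym; apply Rle_plus_epsilon; intros e He;
  specialize (H e He); apply Rabs_le_inv in H; lra.
Qed.

Lemma exists_small_factor (e K : R) : 0 < e -> 0 <= K -> exists eta, 0 < eta /\ eta * K < e.
Proof.
  intros He HK. assert (Hq : 0 < e / (K + 1)) by (apply Rdiv_lt_0_compat; lra).
  exists (e / (K + 1)). split; [exact Hq|].
  replace (e / (K + 1) * K) with (e - e / (K + 1)) by (field; lra). lra.
Qed.

Lemma inv_INR_small (e : R) : 0 < e -> exists N, forall n, (N <= n)%nat -> / (INR n + 1) < e.
Proof.
  intros He. destruct (INR_unbounded (/ e)) as [N HN]. exists N. intros n Hn.
  apply le_INR in Hn. pose proof (pos_INR n).
  assert (Hp : 0 < / e) by (apply Rinv_0_lt_compat; lra).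
  replace e with (/ / e) by (field; lra).
  apply Rinv_lt_contravar; [nra | lra].
Qed.

Lemma tends_minf_iff (f : R -> R) (L : R) :
  tends_minf f L <-> tends_pinf (fun x => f (- x)) L.
Proof.
  split; intros H e He; destruct (H e He) as [M HM]; exists (- M); intros x Hx.
  - apply HM. lra.
  - replace x with (- - x) by ring. apply HM. lra.
Qed.

Lemma tends_pinf_unique (f : R -> R) (L1 L2 : R) :
  tends_pinf f L1 -> tends_pinf f L2 -> L1 = L2.
Proof.
  intros H1 H2. apply eq_epsilon. intros e He.
  destruct (H1 (e / 2)) as [M1 HM1]; [lra|]. destruct (H2 (e / 2)) as [M2 HM2]; [lra|].
  set (x := Rmax M1 M2 + 1).
  assert (Hx1 : M1 < x) by (pose proof (Rmax_l M1 M2); unfold x; lra).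
  assert (Hx2 : M2 < x) by (pose proof (Rmax_r M1 M2); unfold x; lra).
  specialize (HM1 x Hx1). specialize (HM2 x Hx2).
  apply Rabs_def2 in HM1, HM2. apply Rabs_le. lra.
Qed.

Lemma tends_minf_unique (f : R -> R) (L1 L2 : R) :
  tends_minf f L1 -> tends_minf f L2 -> L1 = L2.
Proof. rewrite !tends_minf_iff. apply tends_pinf_unique. Qed.

Lemma lim_pinf_eq (f : R -> R) (L : R) : tends_pinf f L -> lim_pinf f = L.
Proof.
  intros H. apply (tends_pinf_unique f); [|exact H].
  unfold lim_pinf. apply epsilon_spec. eauto.
Qed.

Lemma lim_minf_eq (f : R -> R) (L : R) : tends_minf f L -> lim_minf f = L.
Proof.
  intros H. apply (tends_minf_unique f); [|exact H].
  unfold lim_minf. apply epsilon_spec. eauto.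
Qed.

Lemma tends_pinf_shift (f : R -> R) (z L : R) :
  tends_pinf f L -> tends_pinf (fun y => f (y - z)) L.
Proof.
  intros H e He. destruct (H e He) as [M HM]. exists (M + z). intros y Hy. apply HM. lra.
Qed.

Lemma tends_minf_reflect (f : R -> R) (x L : R) :
  tends_minf f L -> tends_pinf (fun y => f (x - y)) L.
Proof.
  intros H e He. destruct (H e He) as [M HM]. exists (x - M). intros y Hy. apply HM. lra.
Qed.

Lemma cauchy_tends_pinf (f : R -> R) :
  (forall e, 0 < e -> exists T, forall x y, T <= x -> T <= y -> Rabs (f x - f y) <= e) ->
  exists L, tends_pinf f L.
Proof.
  intros Hc.
  assert (Hcc : Cauchy_crit (fun n => f (INR n))).
  { intros e He. destruct (Hc (e / 2)) as [T HT]; [lra|].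
    destruct (INR_unbounded T) as [N HN]. exists N. intros n m Hn Hm.
    apply le_INR in Hn, Hm. unfold Rdist.
    assert (Rabs (f (INR n) - f (INR m)) <= e / 2) by (apply HT; lra). lra. }
  destruct (R_complete _ Hcc) as [L HL]. exists L.
  intros e He. destruct (Hc (e / 2)) as [T HT]; [lra|].
  destruct (HL (e / 2)) as [N1 HN1]; [lra|].
  destruct (INR_unbounded T) as [N2 HN2].
  exists T. intros x Hx.
  specialize (HN1 (max N1 N2) (Nat.le_max_l _ _)). unfold Rdist in HN1.
  pose proof (le_INR _ _ (Nat.le_max_r N1 N2)).
  specialize (HT x (INR (max N1 N2)) ltac:(lra) ltac:(lra)).
  apply Rabs_def2 in HN1. apply Rabs_le_inv in HT. apply Rabs_def1; lra.
Qed.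

Lemma cauchy_tends_minf (f : R -> R) :
  (forall e, 0 < e -> exists T, forall x y, x <= - T -> y <= - T -> Rabs (f x - f y) <= e) ->
  exists L, tends_minf f L.
Proof.
  intros Hc. setoid_rewrite tends_minf_iff. apply cauchy_tends_pinf.
  intros e He. destruct (Hc e He) as [T HT]. exists T. intros x y Hx Hy. apply HT; lra.
Qed.

Lemma sup_R_is_lub (P : R -> Prop) :
  (exists x, P x) -> (exists M, forall x, P x -> x <= M) -> is_lub P (sup_R P).
Proof.
  intros Hne [M HM]. unfold sup_R. apply epsilon_spec.
  destruct (completeness P) as [m Hm]; [exists M; exact HM | exact Hne | eauto].
Qed.

Lemma is_lub_approx (P : R -> Prop) (s e : R) :
  is_lub P s -> 0 < e -> exists v, P v /\ s - e < v.
Proof.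
  intros [Hu Hl] He. apply NNPP. intros Hn.
  assert (s <= s - e); [|lra]. apply Hl. intros v Hv.
  apply Rnot_lt_le. intros Hv'. apply Hn. eauto.
Qed.

Lemma inf_R_spec (P : R -> Prop) (m : R) : (exists x, P x) -> (forall x, P x -> m <= x) ->
  m <= inf_R P /\ (forall x, P x -> inf_R P <= x) /\
  (forall e, 0 < e -> exists x, P x /\ x < inf_R P + e).
Proof.
  intros [x0 Hx0] Hm. unfold inf_R.
  assert (Hlub : is_lub (fun y => P (- y)) (sup_R (fun y => P (- y)))).
  { apply sup_R_is_lub.
    - exists (- x0). rewrite Ropp_involutive. exact Hx0.
    - exists (- m). intros y Hy. specialize (Hm _ Hy). lra. }
  split; [|split].
  - assert (sup_R (fun y => P (- y)) <= - m); [|lra].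
    apply Hlub. intros y Hy. specialize (Hm _ Hy). lra.
  - intros x Hx. assert (- x <= sup_R (fun y => P (- y))); [|lra].
    apply Hlub. rewrite Ropp_involutive. exact Hx.
  - intros e He. destruct (is_lub_approx _ _ e Hlub He) as [y [Hy Hye]].
    exists (- y). split; [exact Hy | lra].
Qed.

Fixpoint chain (a b : R) (p : list R) : Prop :=
  match p with [] => a = b | x :: p' => a < x /\ chain x b p' end.

Fixpoint chain_var (g : R -> R) (a : R) (p : list R) : R :=
  match p with [] => 0 | x :: p' => Rabs (g x - g a) + chain_var g x p' end.

Fixpoint chain_intervals (a : R) (p : list R) : list (R * R) :=
  match p with [] => [] | x :: p' => (a, x) :: chain_intervals x p' end.

Definition interval_family (l : list (R * R)) : Prop :=
  Forall (fun p => fst p < snd p) l /\ ForallOrdPairs disj_int l.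

Lemma chain_le (a b : R) (p : list R) : chain a b p -> a <= b.
Proof.
  revert a; induction p as [|x p IH]; simpl; intros a H; [lra|].
  destruct H as [H1 H2]. specialize (IH _ H2). lra.
Qed.

Lemma var_sum_chain_intervals (g : R -> R) (a : R) (p : list R) :
  var_sum g (chain_intervals a p) = chain_var g a p.
Proof.
  revert a; induction p as [|x p IH]; simpl; intros a; auto.
  rewrite IH, Rabs_minus_sym. reflexivity.
Qed.

Lemma var_sum_app (g : R -> R) (l1 l2 : list (R * R)) :
  var_sum g (l1 ++ l2) = var_sum g l1 + var_sum g l2.
Proof. induction l1 as [|q l1 IH]; simpl; [lra|]. rewrite IH. lra. Qed.

Lemma chain_intervals_inside (a b : R) (p : list R) : chain a b p ->
  Forall (fun q => a <= fst q /\ snd q <= b /\ fst q < snd q) (chain_intervals a p).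
Proof.
  revert a; induction p as [|x p IH]; simpl; intros a H; constructor;
    destruct H as [H1 H2].
  - pose proof (chain_le _ _ _ H2). simpl. lra.
  - eapply Forall_impl; [|exact (IH _ H2)]. simpl. intros q Hq. lra.
Qed.

Lemma interval_family_chain (a b : R) (p : list R) :
  chain a b p -> interval_family (chain_intervals a p).
Proof.
  intros H. split.
  - eapply Forall_impl; [|exact (chain_intervals_inside _ _ _ H)]. simpl; intros; lra.
  - revert a H; induction p as [|x p IH]; simpl; intros a H; constructor.
    + destruct H as [H1 H2].
      eapply Forall_impl; [|exact (chain_intervals_inside _ _ _ H2)].
      intros q Hq. unfold disj_int. simpl. lra.
    + apply (IH x). tauto.
Qed.

Lemma ForallOrdPairs_app {A : Type} (P : A -> A -> Prop) (l1 l2 : list A) :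
  ForallOrdPairs P l1 -> ForallOrdPairs P l2 ->
  (forall x y, In x l1 -> In y l2 -> P x y) -> ForallOrdPairs P (l1 ++ l2).
Proof.
  induction 1 as [|a l1 Ha Hl1 IH]; simpl; intros H2 Hc; auto.
  constructor.
  - apply Forall_app. split; auto. apply Forall_forall. intros y Hy. apply Hc; simpl; auto.
  - apply IH; auto.
Qed.

Lemma interval_family_app (l1 l2 : list (R * R)) :
  interval_family l1 -> interval_family l2 ->
  (forall p q, In p l1 -> In q l2 -> snd p <= fst q) -> interval_family (l1 ++ l2).
Proof.
  intros [H1 H1'] [H2 H2'] Hc. split.
  - apply Forall_app; auto.
  - apply ForallOrdPairs_app; auto. intros p q Hp Hq. left. apply Hc; auto.
Qed.

Lemma interval_family_chains (a1 b1 a2 b2 : R) (p1 p2 : list R) :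
  chain a1 b1 p1 -> chain a2 b2 p2 -> b1 <= a2 ->
  interval_family (chain_intervals a1 p1 ++ chain_intervals a2 p2).
Proof.
  intros H1 H2 H12. apply interval_family_app; try (eapply interval_family_chain; eauto).
  intros p q Hp Hq.
  pose proof (proj1 (Forall_forall _ _) (chain_intervals_inside _ _ _ H1) p Hp).
  pose proof (proj1 (Forall_forall _ _) (chain_intervals_inside _ _ _ H2) q Hq). lra.
Qed.

Section Variation.

Variable g : R -> R.
Hypothesis hg : BV g.

Lemma Var_is_lub : is_lub (variation_set g) (Var g).
Proof.
  destruct hg as [M HM]. apply sup_R_is_lub; [|eauto].
  exists 0, []. repeat split; constructor.
Qed.

Lemma var_sum_le_Var (l : list (R * R)) : interval_family l -> var_sum g l <= Var g.
Proof. intros [H1 H2]. apply Var_is_lub. exists l. auto. Qed.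

Lemma Var_nonneg : 0 <= Var g.
Proof. apply (var_sum_le_Var []). split; constructor. Qed.

Lemma chain_var2_le_Var (a1 b1 a2 b2 : R) (p1 p2 : list R) :
  chain a1 b1 p1 -> chain a2 b2 p2 -> b1 <= a2 ->
  chain_var g a1 p1 + chain_var g a2 p2 <= Var g.
Proof.
  intros H1 H2 H12. rewrite <- !var_sum_chain_intervals, <- var_sum_app.
  apply var_sum_le_Var, (interval_family_chains a1 b1 a2 b2); auto.
Qed.

Lemma chain_var_le_Var (a b : R) (p : list R) : chain a b p -> chain_var g a p <= Var g.
Proof.
  intros H. pose proof (chain_var2_le_Var a b b b p [] H eq_refl (Rle_refl b)). simpl in *. lra.
Qed.

Lemma list_endpoints_bounded (l : list (R * R)) :
  exists T, forall q, In q l -> Rabs (fst q) <= T /\ Rabs (snd q) <= T.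
Proof.
  induction l as [|q l [T HT]]; simpl.
  - exists 0. intros q [].
  - set (m := Rmax (Rabs (fst q)) (Rabs (snd q))).
    exists (Rmax m T). intros q' [<-|Hq'].
    + pose proof (Rmax_l m T). pose proof (Rmax_l (Rabs (fst q)) (Rabs (snd q))).
      pose proof (Rmax_r (Rabs (fst q)) (Rabs (snd q))). unfold m in *. lra.
    + specialize (HT q' Hq'). pose proof (Rmax_r m T). lra.
Qed.

(* A family nearly realising [Var g] lives in some [[-T, T]]; any chain outside it
   can be appended to the family, so its variation is at most the defect. *)
Lemma chain_var_tails_small (e : R) : 0 < e -> exists T,
  (forall a b p, chain a b p -> T <= a -> chain_var g a p <= e) /\
  (forall a b p, chain a b p -> b <= - T -> chain_var g a p <= e).
Proof.
  intros He.
  destruct (is_lub_approx _ _ _ Var_is_lub He) as [v [[l [Hl1 [Hl2 ->]]] Hv]].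
  destruct (list_endpoints_bounded l) as [T HT]. exists T. split.
  - intros a b p Hc Ha.
    assert (var_sum g (l ++ chain_intervals a p) <= Var g).
    { apply var_sum_le_Var, interval_family_app; [split; auto | eapply interval_family_chain; eauto |].
      intros x y Hx Hy. destruct (HT x Hx) as [_ Hx'].
      pose proof (proj1 (Forall_forall _ _) (chain_intervals_inside _ _ _ Hc) y Hy).
      pose proof (Rle_abs (snd x)). lra. }
    rewrite var_sum_app, var_sum_chain_intervals in H. lra.
  - intros a b p Hc Hb.
    assert (var_sum g (chain_intervals a p ++ l) <= Var g).
    { apply var_sum_le_Var, interval_family_app; [eapply interval_family_chain; eauto | split; auto |].
      intros x y Hx Hy. destruct (HT y Hy) as [Hy' _].
      pose proof (proj1 (Forall_forall _ _) (chain_intervals_inside _ _ _ Hc) x Hx).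
      pose proof (Ropp_le_Rabs (fst y)). lra. }
    rewrite var_sum_app, var_sum_chain_intervals in H. lra.
Qed.

Lemma BV_limits : tends_pinf g (lim_pinf g) /\ tends_minf g (lim_minf g).
Proof.
  assert (Hpair : forall e, 0 < e -> exists T,
    (forall x y, T <= x -> T <= y -> Rabs (g x - g y) <= e) /\
    (forall x y, x <= - T -> y <= - T -> Rabs (g x - g y) <= e)).
  { intros e He. destruct (chain_var_tails_small e He) as [T [HT1 HT2]].
    exists T. split; intros x y Hx Hy;
      destruct (Rtotal_order x y) as [Hxy|[<-|Hxy]];
      try (rewrite Rminus_diag, Rabs_R0; lra).
    - specialize (HT1 x y [y] ltac:(simpl; lra) Hx). simpl in HT1. rewrite Rabs_minus_sym. lra.
    - specialize (HT1 y x [x] ltac:(simpl; lra) Hy). simpl in HT1. lra.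
    - specialize (HT2 x y [y] ltac:(simpl; lra) Hy). simpl in HT2. rewrite Rabs_minus_sym. lra.
    - specialize (HT2 y x [x] ltac:(simpl; lra) Hx). simpl in HT2. lra. }
  split.
  - destruct (cauchy_tends_pinf g) as [L HL].
    + intros e He. destruct (Hpair e He) as [T [HT _]]. eauto.
    + rewrite (lim_pinf_eq _ _ HL). exact HL.
  - destruct (cauchy_tends_minf g) as [L HL].
    + intros e He. destruct (Hpair e He) as [T [_ HT]]. eauto.
    + rewrite (lim_minf_eq _ _ HL). exact HL.
Qed.

End Variation.

Fixpoint div_end (a : R) (l : list (R * R)) : R :=
  match l with [] => a | (_, x) :: l' => div_end x l' end.

Lemma div_end_app (a : R) (l1 l2 : list (R * R)) :
  div_end a (l1 ++ l2) = div_end (div_end a l1) l2.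
Proof. revert a; induction l1 as [|[t x] l1 IH]; simpl; auto. Qed.

Lemma fine_div_end (d : R -> R) (a b : R) (l : list (R * R)) :
  fine_div d a b l -> div_end a l = b.
Proof. revert a; induction l as [|[t x] l IH]; simpl; intros a H; auto. apply IH; tauto. Qed.

Lemma fine_div_le (d : R -> R) (a b : R) (l : list (R * R)) : fine_div d a b l -> a <= b.
Proof.
  revert a; induction l as [|[t x] l IH]; simpl; intros a H; [lra|].
  destruct H as [H1 [_ [_ [_ H2]]]]. specialize (IH _ H2). lra.
Qed.

Lemma fine_div_mono (d1 d2 : R -> R) (a b : R) (l : list (R * R)) :
  (forall x, d1 x <= d2 x) -> fine_div d1 a b l -> fine_div d2 a b l.
Proof.
  intros Hd. revert a; induction l as [|[t x] l IH]; simpl; intros a H; auto.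
  destruct H as [H1 [H2 [H3 [H4 H5]]]]. specialize (Hd t).
  repeat split; try lra. apply IH; auto.
Qed.

Lemma fine_div_app (d : R -> R) (a c b : R) (l1 l2 : list (R * R)) :
  fine_div d a c l1 -> fine_div d c b l2 -> fine_div d a b (l1 ++ l2).
Proof.
  revert a; induction l1 as [|[t x] l1 IH]; simpl; intros a H1 H2.
  - subst; auto.
  - destruct H1 as [? [? [? [? ?]]]]. do 4 (split; [assumption|]). eapply IH; eauto.
Qed.

Lemma fine_div_chain (d : R -> R) (a b : R) (l : list (R * R)) :
  fine_div d a b l -> chain a b (map snd l).
Proof.
  revert a; induction l as [|[t x] l IH]; simpl; intros a H; auto.
  destruct H as [? [? [? [? ?]]]]. split; auto.
Qed.

Lemma st_sum_app (H g : R -> R) (a : R) (l1 l2 : list (R * R)) :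
  st_sum H g a (l1 ++ l2) = st_sum H g a l1 + st_sum H g (div_end a l1) l2.
Proof.
  revert a; induction l1 as [|[t x] l1 IH]; simpl; intros a; [lra|]. rewrite IH. lra.
Qed.

Lemma st_sum_const_sub (H g : R -> R) (c a : R) (l : list (R * R)) :
  st_sum (fun t => c - H t) g a l = c * (g (div_end a l) - g a) - st_sum H g a l.
Proof.
  revert a; induction l as [|[t x] l IH]; simpl; intros a; [ring|]. rewrite IH. ring.
Qed.

Lemma st_sum_sub (H1 H2 g : R -> R) (a : R) (l : list (R * R)) :
  st_sum H1 g a l - st_sum H2 g a l = st_sum (fun t => H1 t - H2 t) g a l.
Proof.
  revert a; induction l as [|[t x] l IH]; simpl; intros a; [ring|]. rewrite <- IH. ring.
Qed.

Lemma st_sum_bound (H g d : R -> R) (a b B : R) (l : list (R * R)) :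
  fine_div d a b l -> (forall t, a <= t <= b -> Rabs (H t) <= B) ->
  Rabs (st_sum H g a l) <= B * chain_var g a (map snd l).
Proof.
  revert a; induction l as [|[t x] l IH]; simpl; intros a Hf HB.
  - rewrite Rabs_R0. lra.
  - destruct Hf as [H1 [H2 [H3 [H4 H5]]]]. pose proof (fine_div_le _ _ _ _ H5).
    assert (IH' := IH x H5 ltac:(intros; apply HB; lra)).
    assert (Rabs (H t) <= B) by (apply HB; lra).
    assert (Rabs (H t) * Rabs (g x - g a) <= B * Rabs (g x - g a))
      by (apply Rmult_le_compat_r; [apply Rabs_pos | auto]).
    eapply Rle_trans; [apply Rabs_triang|]. rewrite Rabs_mult. lra.
Qed.

(* The supremum [c] of the points reachable by a [d]-fine division is itself
   reachable (tag [c] on the last piece), and if [c < b] one can step past it. *)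
Lemma cousin (d : R -> R) (a b : R) :
  (forall x, 0 < d x) -> a <= b -> exists l, fine_div d a b l.
Proof.
  intros Hd Hab.
  set (E := fun x => a <= x <= b /\ exists l, fine_div d a x l).
  assert (HE : E a) by (split; [lra | exists []; reflexivity]).
  assert (Hb : bound E) by (exists b; intros x [Hx _]; lra).
  destruct (completeness E Hb (ex_intro _ a HE)) as [c [Hcu Hcl]].
  assert (Hac : a <= c) by (apply Hcu, HE).
  assert (Hcb : c <= b) by (apply Hcl; intros x [Hx _]; lra).
  pose proof (Hd c) as Hdc.
  assert (Hc : exists l, fine_div d a c l).
  { destruct (classic (exists x, E x /\ c - d c < x)) as [[x [[Hx [l Hl]] Hxc]]|Hn].
    - assert (x <= c) by (apply Hcu; split; eauto).
      destruct (Req_dec x c) as [->|Hne]; [eauto|].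
      exists (l ++ [(c, c)]). eapply fine_div_app; [exact Hl|]. simpl. repeat split; lra.
    - exfalso. assert (c <= c - d c); [|lra].
      apply Hcl. intros x Hx. apply Rnot_lt_le. intros Hx'. apply Hn. eauto. }
  destruct (Req_dec c b) as [<-|Hne]; auto.
  exfalso. destruct Hc as [l Hl].
  set (c' := Rmin b (c + d c / 2)).
  assert (Hc1 : c < c') by (unfold c'; apply Rmin_glb_lt; lra).
  assert (Hc2 : c' <= c + d c / 2) by apply Rmin_r.
  assert (Hc3 : c' <= b) by apply Rmin_l.
  assert (E c').
  { split; [lra|]. exists (l ++ [(c, c')]). eapply fine_div_app; [exact Hl|].
    simpl. repeat split; lra. }
  specialize (Hcu c' H). lra.
Qed.

Lemma fine_div_common (d1 d2 : R -> R) (a b : R) :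
  (forall x, 0 < d1 x) -> (forall x, 0 < d2 x) -> a <= b ->
  exists l, fine_div d1 a b l /\ fine_div d2 a b l.
Proof.
  intros H1 H2 Hab.
  destruct (cousin (fun x => Rmin (d1 x) (d2 x)) a b) as [l Hl]; auto.
  { intros x. apply Rmin_glb_lt; auto. }
  exists l. split; eapply fine_div_mono; eauto; intros x; [apply Rmin_l | apply Rmin_r].
Qed.

Lemma HS_int_ab_unique (H g : R -> R) (a b J1 J2 : R) : a <= b ->
  HS_int_ab H g a b J1 -> HS_int_ab H g a b J2 -> J1 = J2.
Proof.
  intros Hab H1 H2. apply eq_epsilon. intros e He.
  destruct (H1 (e / 2)) as [d1 [Hd1 Hl1]]; [lra|]. destruct (H2 (e / 2)) as [d2 [Hd2 Hl2]]; [lra|].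
  destruct (fine_div_common d1 d2 a b Hd1 Hd2 Hab) as [l [Hl1' Hl2']].
  specialize (Hl1 l Hl1'). specialize (Hl2 l Hl2').
  apply Rabs_def2 in Hl1, Hl2. apply Rabs_le. lra.
Qed.

Lemma HS_int_unique (H g : R -> R) (I1 I2 : R) : HS_int H g I1 -> HS_int H g I2 -> I1 = I2.
Proof.
  intros H1 H2. apply eq_epsilon. intros e He.
  destruct (H1 (e / 2)) as [M1 HM1]; [lra|]. destruct (H2 (e / 2)) as [M2 HM2]; [lra|].
  set (T := Rabs M1 + Rabs M2 + 1).
  pose proof (Rle_abs M1). pose proof (Rle_abs M2).
  pose proof (Ropp_le_Rabs M1). pose proof (Ropp_le_Rabs M2).
  destruct (HM1 (- T) T ltac:(unfold T; lra) ltac:(unfold T; lra)) as [J1 [HJ1 HJ1']].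
  destruct (HM2 (- T) T ltac:(unfold T; lra) ltac:(unfold T; lra)) as [J2 [HJ2 HJ2']].
  assert (J1 = J2) as <- by (apply (HS_int_ab_unique H g (- T) T); auto; unfold T; lra).
  apply Rabs_def2 in HJ1', HJ2'. apply Rabs_le. lra.
Qed.

Lemma HS_integral_eq (H g : R -> R) (I : R) : HS_int H g I -> HS_integral H g = I.
Proof.
  intros HI. apply (HS_int_unique H g); auto. unfold HS_integral. apply epsilon_spec. eauto.
Qed.

Definition unif_cont (H : R -> R) : Prop := forall e, 0 < e -> exists d, 0 < d /\
  forall s t, Rabs (s - t) < d -> Rabs (H s - H t) <= e.

Fixpoint gauge_min (dn : nat -> R -> R) (n : nat) : R -> R :=
  match n with O => dn O | S k => fun x => Rmin (gauge_min dn k x) (dn (S k) x) end.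

Lemma gauge_min_pos (dn : nat -> R -> R) (n : nat) (x : R) :
  (forall k x, 0 < dn k x) -> 0 < gauge_min dn n x.
Proof. intros Hp. induction n as [|n IH]; simpl; auto. apply Rmin_glb_lt; auto. Qed.

Lemma gauge_min_le (dn : nat -> R -> R) (n k : nat) (x : R) :
  (k <= n)%nat -> gauge_min dn n x <= dn k x.
Proof.
  induction n as [|n IH]; intros Hk.
  - inversion Hk; subst; simpl; lra.
  - destruct (Nat.eq_dec k (S n)) as [->|Hne]; simpl; [apply Rmin_r|].
    eapply Rle_trans; [apply Rmin_l|]. apply IH; lia.
Qed.

(* The division [P n] is fine for every gauge [dn k] with [k <= n], so its
   Stieltjes sums form a Cauchy sequence. *)
Lemma HS_int_ab_cauchy (H g : R -> R) (a b : R) : a <= b ->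
  (forall e, 0 < e -> exists d : R -> R, (forall x, 0 < d x) /\ forall l1 l2,
     fine_div d a b l1 -> fine_div d a b l2 -> Rabs (st_sum H g a l1 - st_sum H g a l2) <= e) ->
  exists J, HS_int_ab H g a b J.
Proof.
  intros Hab Hc.
  set (Pd := fun n (d : R -> R) => (forall x, 0 < d x) /\ forall l1 l2, fine_div d a b l1 ->
     fine_div d a b l2 -> Rabs (st_sum H g a l1 - st_sum H g a l2) <= / (INR n + 1)).
  set (dn := fun n => epsilon (inhabits (fun _ : R => 1)) (Pd n)).
  assert (Hdn : forall n, Pd n (dn n)).
  { intros n. unfold dn. apply epsilon_spec. apply Hc. apply Rinv_0_lt_compat.
    pose proof (pos_INR n). lra. }
  assert (Hpos : forall k x, 0 < dn k x) by (intros k x; apply (proj1 (Hdn k))).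
  set (P := fun n => epsilon (inhabits []) (fun l => fine_div (gauge_min dn n) a b l)).
  assert (HP : forall n, fine_div (gauge_min dn n) a b (P n)).
  { intros n. unfold P. apply epsilon_spec, cousin; auto. intros x. apply gauge_min_pos; auto. }
  assert (Hfine : forall n k, (k <= n)%nat -> fine_div (dn k) a b (P n)).
  { intros n k Hk. eapply fine_div_mono; [|apply HP]. intros x. apply gauge_min_le; auto. }
  set (s := fun n => st_sum H g a (P n)).
  assert (Hcc : Cauchy_crit s).
  { intros e He. destruct (inv_INR_small e He) as [N HN]. exists N. intros n m Hn Hm.
    unfold Rdist, s. eapply Rle_lt_trans; [apply (proj2 (Hdn N)); apply Hfine; auto|].
    apply HN; auto. }
  destruct (R_complete s Hcc) as [J HJ]. exists J.
  intros e He. destruct (inv_INR_small (e / 2)) as [N HN]; [lra|].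
  exists (dn N). split; [apply Hpos|]. intros l Hl.
  destruct (HJ (e / 2)) as [N1 HN1]; [lra|].
  set (m := max N N1).
  specialize (HN1 m (Nat.le_max_r _ _)). unfold Rdist, s in HN1.
  assert (Hq : Rabs (st_sum H g a l - st_sum H g a (P m)) <= / (INR N + 1))
    by (apply (proj2 (Hdn N)); auto; apply Hfine, Nat.le_max_l).
  specialize (HN N (le_n N)).
  apply Rabs_le_inv in Hq. apply Rabs_def2 in HN1. apply Rabs_def1; lra.
Qed.

(* Divisions fine for the constant gauge [d], with tags allowed outside their piece:
   tags of overlapping pieces of two such divisions are less than [2 d] apart. *)
Fixpoint near_div (d a b : R) (l : list (R * R)) : Prop :=
  match l with
  | [] => a = b
  | (t, x) :: l' => a < x /\ t - d < a /\ x < t + d /\ near_div d x b l'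
  end.

Lemma fine_div_near_div (d a b : R) (l : list (R * R)) :
  fine_div (fun _ => d) a b l -> near_div d a b l.
Proof.
  revert a; induction l as [|[t x] l IH]; simpl; intros a H; auto.
  destruct H as [? [? [? [? ?]]]]. repeat split; auto.
Qed.

Lemma near_div_le (d a b : R) (l : list (R * R)) : near_div d a b l -> a <= b.
Proof.
  revert a; induction l as [|[t x] l IH]; simpl; intros a H; [lra|].
  destruct H as [H1 [_ [_ H2]]]. specialize (IH _ H2). lra.
Qed.

Lemma Rabs_step_bound (h w dg r : R) :
  Rabs h <= w -> Rabs (h * dg + r) <= w * Rabs dg + Rabs r.
Proof.
  intros Hh. eapply Rle_trans; [apply Rabs_triang|]. rewrite Rabs_mult.
  assert (Rabs h * Rabs dg <= w * Rabs dg) by (apply Rmult_le_compat_r; [apply Rabs_pos | auto]).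
  lra.
Qed.

(* Merge the two divisions along their common refinement, whose points form the chain. *)
Lemma near_div_st_sum_diff (H g : R -> R) (d w : R) :
  (forall s t, Rabs (s - t) < 2 * d -> Rabs (H s - H t) <= w) ->
  forall n P Q a b, (length P + length Q <= n)%nat -> near_div d a b P -> near_div d a b Q ->
  exists c, chain a b c /\ Rabs (st_sum H g a P - st_sum H g a Q) <= w * chain_var g a c.
Proof.
  intros HH n. induction n as [|n IH]; intros P Q a b Hn HP HQ.
  - destruct P; [|simpl in Hn; lia]. destruct Q; [|simpl in Hn; lia]. simpl in *.
    exists []. simpl. split; auto. rewrite Rminus_diag, Rabs_R0; lra.
  - destruct P as [|[t x] P']; destruct Q as [|[s y] Q']; simpl in HP, HQ, Hn.
    + exists []. simpl. split; auto. rewrite Rminus_diag, Rabs_R0; lra.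
    + destruct HQ as [H1 [_ [_ H4]]]. pose proof (near_div_le _ _ _ _ H4). lra.
    + destruct HP as [H1 [_ [_ H4]]]. pose proof (near_div_le _ _ _ _ H4). lra.
    + destruct HP as [Ha1 [Ha2 [Ha3 Ha4]]]. destruct HQ as [Hb1 [Hb2 [Hb3 Hb4]]].
      assert (Hts : Rabs (H t - H s) <= w) by (apply HH; apply Rabs_def1; lra).
      destruct (Rtotal_order x y) as [Hxy|[<-|Hxy]].
      * destruct (IH P' ((s, y) :: Q') x b ltac:(simpl; lia) Ha4) as [c [Hc Hb]];
          [simpl; repeat split; auto; lra|].
        exists (x :: c). split; [simpl; auto|]. simpl in Hb |- *.
        replace (H t * (g x - g a) + st_sum H g x P' - (H s * (g y - g a) + st_sum H g y Q'))
          with ((H t - H s) * (g x - g a)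
                + (st_sum H g x P' - (H s * (g y - g x) + st_sum H g y Q'))) by ring.
        eapply Rle_trans; [exact (Rabs_step_bound _ _ _ _ Hts)|]. lra.
      * destruct (IH P' Q' x b ltac:(simpl; lia) Ha4 Hb4) as [c [Hc Hb]].
        exists (x :: c). split; [simpl; auto|]. simpl.
        replace (H t * (g x - g a) + st_sum H g x P' - (H s * (g x - g a) + st_sum H g x Q'))
          with ((H t - H s) * (g x - g a) + (st_sum H g x P' - st_sum H g x Q')) by ring.
        eapply Rle_trans; [exact (Rabs_step_bound _ _ _ _ Hts)|]. lra.
      * destruct (IH ((t, x) :: P') Q' y b ltac:(simpl; lia)) as [c [Hc Hb]];
          [simpl; repeat split; auto; lra | exact Hb4 |].
        exists (y :: c). split; [simpl; auto|]. simpl in Hb |- *.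
        replace (H t * (g x - g a) + st_sum H g x P' - (H s * (g y - g a) + st_sum H g y Q'))
          with ((H t - H s) * (g y - g a)
                + ((H t * (g x - g y) + st_sum H g x P') - st_sum H g y Q')) by ring.
        eapply Rle_trans; [exact (Rabs_step_bound _ _ _ _ Hts)|]. lra.
Qed.

Lemma HS_int_ab_exists (H g : R -> R) (a b : R) :
  BV g -> unif_cont H -> a <= b -> exists J, HS_int_ab H g a b J.
Proof.
  intros Hg HU Hab. apply HS_int_ab_cauchy; auto. intros e He.
  destruct (exists_small_factor e (Var g) He (Var_nonneg g Hg)) as [w [Hw Hwe]].
  destruct (HU w Hw) as [d [Hd HH]].
  exists (fun _ => d / 2). split; [intros; lra|]. intros l1 l2 H1 H2.
  destruct (near_div_st_sum_diff H g (d / 2) w ltac:(intros s t Hst; apply HH; lra)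
     (length l1 + length l2) l1 l2 a b (le_n _)
     (fine_div_near_div _ _ _ _ H1) (fine_div_near_div _ _ _ _ H2)) as [c [Hc Hb]].
  pose proof (chain_var_le_Var g Hg a b c Hc).
  assert (w * chain_var g a c <= w * Var g) by (apply Rmult_le_compat_l; lra).
  lra.
Qed.

Definition HS_ab_value (H g : R -> R) (a b : R) : R := epsilon (inhabits 0) (HS_int_ab H g a b).

Section ImproperIntegral.

Variables (H g : R -> R) (B : R).
Hypotheses (hg : BV g) (hH : unif_cont H) (hB : forall t, Rabs (H t) <= B).

Lemma HS_ab_value_spec (a b : R) : a <= b -> HS_int_ab H g a b (HS_ab_value H g a b).
Proof. intros Hab. unfold HS_ab_value. apply epsilon_spec, HS_int_ab_exists; auto. Qed.

Lemma HS_ab_value_outer (a' a b b' e : R) : a' <= a -> a <= b -> b <= b' -> 0 < e ->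
  exists c1 c3, chain a' a c1 /\ chain b b' c3 /\
    Rabs (HS_ab_value H g a' b' - HS_ab_value H g a b)
      <= B * (chain_var g a' c1 + chain_var g b c3) + e.
Proof.
  intros H1 H2 H3 He.
  destruct (HS_ab_value_spec a' b' ltac:(lra) (e / 2) ltac:(lra)) as [d1 [Hd1 Hl1]].
  destruct (HS_ab_value_spec a b H2 (e / 2) ltac:(lra)) as [d2 [Hd2 Hl2]].
  set (d := fun x => Rmin (d1 x) (d2 x)).
  assert (Hd : forall x, 0 < d x) by (intros; apply Rmin_glb_lt; auto).
  destruct (cousin d a' a Hd H1) as [P1 HP1].
  destruct (cousin d a b Hd H2) as [P2 HP2].
  destruct (cousin d b b' Hd H3) as [P3 HP3].
  exists (map snd P1), (map snd P3).
  split; [eapply fine_div_chain; eauto|]. split; [eapply fine_div_chain; eauto|].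
  assert (Hf : fine_div d a' b' (P1 ++ P2 ++ P3))
    by (eapply fine_div_app; [exact HP1|]; eapply fine_div_app; eauto).
  specialize (Hl1 _ (fine_div_mono _ _ _ _ _ (fun x => Rmin_l _ _) Hf)).
  specialize (Hl2 _ (fine_div_mono _ _ _ _ _ (fun x => Rmin_r _ _) HP2)).
  rewrite st_sum_app, (fine_div_end _ _ _ _ HP1), st_sum_app, (fine_div_end _ _ _ _ HP2) in Hl1.
  pose proof (st_sum_bound H g d a' a B P1 HP1 (fun t _ => hB t)) as B1.
  pose proof (st_sum_bound H g d b b' B P3 HP3 (fun t _ => hB t)) as B3.
  apply Rabs_le_inv in B1, B3. apply Rabs_def2 in Hl1, Hl2. apply Rabs_le. lra.
Qed.

Lemma HS_ab_value_tail (e : R) : 0 < e -> exists T, forall a' a b b',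
  a' <= a -> a <= b -> b <= b' -> a <= - T -> T <= b ->
  Rabs (HS_ab_value H g a' b' - HS_ab_value H g a b) <= e.
Proof.
  intros He. assert (HB0 : 0 <= B) by (pose proof (Rabs_pos (H 0)); pose proof (hB 0); lra).
  destruct (exists_small_factor e (2 * B) He ltac:(lra)) as [eta [Heta Hee]].
  destruct (chain_var_tails_small g hg eta Heta) as [T [HT1 HT2]]. exists T.
  intros a' a b b' H1 H2 H3 H4 H5. apply Rle_plus_epsilon. intros e' He'.
  destruct (HS_ab_value_outer a' a b b' e' H1 H2 H3 He') as [c1 [c3 [Hc1 [Hc3 Hb]]]].
  specialize (HT2 _ _ _ Hc1 H4). specialize (HT1 _ _ _ Hc3 H5).
  assert (B * (chain_var g a' c1 + chain_var g b c3) <= B * (2 * eta))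
    by (apply Rmult_le_compat_l; lra).
  lra.
Qed.

Lemma HS_int_exists : exists I, HS_int H g I.
Proof.
  set (u := fun n => HS_ab_value H g (- INR n) (INR n)).
  assert (Hcc : Cauchy_crit u).
  { intros e He. destruct (HS_ab_value_tail (e / 2) ltac:(lra)) as [T HT].
    destruct (INR_unbounded (Rabs T)) as [N HN].
    pose proof (Rle_abs T). pose proof (Ropp_le_Rabs T).
    exists N. intros n m Hn Hm. apply le_INR in Hn, Hm. unfold Rdist, u.
    destruct (Nat.le_ge_cases n m) as [Hnm|Hnm]; apply le_INR in Hnm.
    - rewrite Rabs_minus_sym. eapply Rle_lt_trans; [apply HT; lra | lra].
    - eapply Rle_lt_trans; [apply HT; lra | lra]. }
  destruct (R_complete u Hcc) as [I HI]. exists I.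
  intros e He. destruct (HS_ab_value_tail (e / 2) ltac:(lra)) as [T HT].
  destruct (HI (e / 2)) as [N1 HN1]; [lra|].
  pose proof (Rle_abs T). pose proof (Ropp_le_Rabs T).
  exists (Rabs T + 1). intros a b Ha Hb.
  exists (HS_ab_value H g a b). split; [apply HS_ab_value_spec; lra|].
  destruct (INR_unbounded (Rabs a + Rabs b)) as [Nb HNb].
  set (m := max N1 Nb). pose proof (le_INR _ _ (Nat.le_max_r N1 Nb)) as Hm. fold m in Hm.
  specialize (HN1 m (Nat.le_max_l _ _)). unfold Rdist, u in HN1.
  pose proof (Rle_abs a). pose proof (Ropp_le_Rabs a).
  pose proof (Rle_abs b). pose proof (Ropp_le_Rabs b).
  assert (Hq : Rabs (HS_ab_value H g (- INR m) (INR m) - HS_ab_value H g a b) <= e / 2)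
    by (apply HT; lra).
  apply Rabs_le_inv in Hq. apply Rabs_def2 in HN1. apply Rabs_def1; lra.
Qed.

End ImproperIntegral.

Lemma HS_int_diff_bound (H1 H2 g : R -> R) (I1 I2 K : R) :
  BV g -> HS_int H1 g I1 -> HS_int H2 g I2 ->
  (forall t, Rabs (H1 t - H2 t) <= K) -> Rabs (I1 - I2) <= K * Var g.
Proof.
  intros Hg HI1 HI2 HK.
  assert (HK0 : 0 <= K) by (pose proof (HK 0); pose proof (Rabs_pos (H1 0 - H2 0)); lra).
  apply Rle_plus_epsilon. intros e He.
  destruct (HI1 (e / 4)) as [M1 HM1]; [lra|]. destruct (HI2 (e / 4)) as [M2 HM2]; [lra|].
  set (T := Rabs M1 + Rabs M2 + 1).
  pose proof (Rle_abs M1). pose proof (Rle_abs M2).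
  pose proof (Ropp_le_Rabs M1). pose proof (Ropp_le_Rabs M2).
  destruct (HM1 (- T) T ltac:(unfold T; lra) ltac:(unfold T; lra)) as [J1 [HJ1 HJ1']].
  destruct (HM2 (- T) T ltac:(unfold T; lra) ltac:(unfold T; lra)) as [J2 [HJ2 HJ2']].
  destruct (HJ1 (e / 4)) as [d1 [Hd1 Hl1]]; [lra|].
  destruct (HJ2 (e / 4)) as [d2 [Hd2 Hl2]]; [lra|].
  destruct (fine_div_common d1 d2 (- T) T Hd1 Hd2 ltac:(unfold T; lra)) as [l [Hl1' Hl2']].
  specialize (Hl1 l Hl1'). specialize (Hl2 l Hl2').
  pose proof (st_sum_bound (fun t => H1 t - H2 t) g _ _ _ K l Hl1' (fun t _ => HK t)) as Hb.
  rewrite <- st_sum_sub in Hb.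
  pose proof (chain_var_le_Var g Hg _ _ _ (fine_div_chain _ _ _ _ Hl1')).
  assert (K * chain_var g (- T) (map snd l) <= K * Var g) by (apply Rmult_le_compat_l; lra).
  apply Rabs_le_inv in Hb. apply Rabs_def2 in Hl1, Hl2, HJ1', HJ2'. apply Rabs_le. lra.
Qed.

(* Split the integral at [t0]: on [[t0, b]] the Stieltjes sums of [H] are
   [c (g b - g t0)] minus those of [c - H]. *)
Lemma HS_int_split_bound (H g : R -> R) (c I t0 B1 B2 K : R) : BV g -> HS_int H g I ->
  (forall y, y <= t0 -> Rabs (H y) <= B1) -> (forall y, t0 <= y -> Rabs (c - H y) <= B2) ->
  (forall a1 b1 p1 a2 b2 p2, chain a1 b1 p1 -> chain a2 b2 p2 -> b1 <= t0 -> t0 <= a2 ->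
      B1 * chain_var g a1 p1 + B2 * chain_var g a2 p2 <= K) ->
  Rabs (c * lim_pinf g - I - c * g t0) <= K.
Proof.
  intros Hg HI HB1 HB2 HK.
  destruct (BV_limits g Hg) as [Hgp _].
  apply Rle_plus_epsilon. intros e He. pose proof (Rabs_pos c).
  destruct (exists_small_factor e (Rabs c + 2) He ltac:(lra)) as [eta [Heta Hee]].
  destruct (HI eta Heta) as [M HM]. destruct (Hgp eta Heta) as [Mg HMg].
  pose proof (Rle_abs M). pose proof (Ropp_le_Rabs M). pose proof (Rabs_pos Mg).
  pose proof (Rle_abs Mg). pose proof (Rle_abs t0). pose proof (Ropp_le_Rabs t0).
  set (a := - (Rabs M + Rabs t0 + 1)). set (b := Rabs M + Rabs Mg + Rabs t0 + 1).
  destruct (HM a b ltac:(unfold a; lra) ltac:(unfold b; lra)) as [J [HJ HJI]].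
  specialize (HMg b ltac:(unfold b; lra)).
  destruct (HJ eta Heta) as [d [Hd Hl]].
  destruct (cousin d a t0 Hd ltac:(unfold a; lra)) as [P1 HP1].
  destruct (cousin d t0 b Hd ltac:(unfold b; lra)) as [P2 HP2].
  specialize (Hl _ (fine_div_app _ _ _ _ _ _ HP1 HP2)).
  rewrite st_sum_app, (fine_div_end _ _ _ _ HP1) in Hl.
  pose proof (st_sum_bound H g d a t0 B1 P1 HP1 (fun t Ht => HB1 t (proj2 Ht))) as S1.
  pose proof (st_sum_bound (fun t => c - H t) g d t0 b B2 P2 HP2 (fun t Ht => HB2 t (proj1 Ht)))
    as S2.
  rewrite st_sum_const_sub, (fine_div_end _ _ _ _ HP2) in S2.
  pose proof (HK _ _ _ _ _ _ (fine_div_chain _ _ _ _ HP1) (fine_div_chain _ _ _ _ HP2)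
                 (Rle_refl t0) (Rle_refl t0)).
  assert (Hcg : Rabs (c * (lim_pinf g - g b)) <= Rabs c * eta).
  { rewrite Rabs_mult. apply Rmult_le_compat_l; auto. rewrite Rabs_minus_sym. lra. }
  apply Rabs_le_inv in S1, S2, Hcg. apply Rabs_def2 in Hl, HJI. apply Rabs_le. nra.
Qed.

Fixpoint div_reflect (x a : R) (l : list (R * R)) : list (R * R) :=
  match l with [] => [] | (t, y) :: l' => div_reflect x y l' ++ [(x - t, x - a)] end.

Lemma fine_div_reflect (d : R -> R) (x a b : R) (l : list (R * R)) :
  fine_div (fun u => d (x - u)) a b l -> fine_div d (x - b) (x - a) (div_reflect x a l).
Proof.
  revert a; induction l as [|[t y] l IH]; simpl; intros a H.
  - subst. auto.
  - destruct H as [H1 [H2 [H3 [H4 H5]]]]. eapply fine_div_app; [apply IH; exact H5|].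
    simpl. repeat split; lra.
Qed.

Lemma div_end_reflect (x a : R) (l : list (R * R)) :
  div_end (x - div_end a l) (div_reflect x a l) = x - a.
Proof.
  revert a; induction l as [|[t y] l IH]; simpl; intros a; auto.
  rewrite div_end_app, IH. reflexivity.
Qed.

Lemma st_sum_reflect (H g : R -> R) (x a : R) (l : list (R * R)) :
  st_sum (fun t => H (x - t)) g (x - div_end a l) (div_reflect x a l)
  = - st_sum H (fun u => g (x - u)) a l.
Proof.
  revert a; induction l as [|[t y] l IH]; simpl; intros a; [ring|].
  rewrite st_sum_app, IH, (div_end_reflect x y l). simpl.
  replace (x - (x - t)) with t by ring. ring.
Qed.

(* Substituting [u = x - y] reverses orientation, so [- int H (x - y) dg(y)]
   becomes [int H(u) d(g (x - u))]. *)
Lemma HS_int_reflect (H g : R -> R) (c x I : R) : BV g ->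
  HS_int (fun y => c - H (x - y)) g I ->
  HS_int H (fun u => g (x - u)) (I - c * (lim_pinf g - lim_minf g)).
Proof.
  intros Hg HI. destruct (BV_limits g Hg) as [Hgp Hgm].
  set (Gp := lim_pinf g) in *. set (Gm := lim_minf g) in *.
  intros e He. pose proof (Rabs_pos c).
  destruct (exists_small_factor (e / 2) (2 * Rabs c) ltac:(lra) ltac:(lra)) as [eta [Heta Hce]].
  destruct (HI (e / 2)) as [M HM]; [lra|].
  destruct (Hgp eta Heta) as [Tp HTp]. destruct (Hgm eta Heta) as [Tm HTm].
  pose proof (Rle_abs M). pose proof (Ropp_le_Rabs M).
  pose proof (Rle_abs x). pose proof (Ropp_le_Rabs x).
  pose proof (Rle_abs Tp). pose proof (Ropp_le_Rabs Tp).
  pose proof (Rle_abs Tm). pose proof (Ropp_le_Rabs Tm).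
  exists (Rabs M + Rabs x + Rabs Tp + Rabs Tm + 1). intros a2 b2 Ha2 Hb2.
  set (a := x - b2). set (b := x - a2).
  destruct (HM a b ltac:(unfold a; lra) ltac:(unfold b; lra)) as [J [HJ HJI]].
  specialize (HTp b ltac:(unfold b; lra)). specialize (HTm a ltac:(unfold a; lra)).
  exists (J - c * (g b - g a)). split.
  - intros e' He'. destruct (HJ e' He') as [d [Hd Hl]].
    exists (fun u => d (x - u)). split; [intros; apply Hd|]. intros l2 Hl2.
    specialize (Hl _ (fine_div_reflect d x a2 b2 l2 Hl2)).
    pose proof (div_end_reflect x a2 l2) as E1. pose proof (st_sum_reflect H g x a2 l2) as E2.
    rewrite (fine_div_end _ _ _ _ Hl2) in E1, E2. fold a b in E1, E2.
    rewrite (st_sum_const_sub (fun y => H (x - y))), E1, E2 in Hl.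
    apply Rabs_def2 in Hl. apply Rabs_def1; lra.
  - assert (Hcg : Rabs (c * (g b - Gp)) + Rabs (c * (g a - Gm)) <= 2 * Rabs c * eta).
    { rewrite !Rabs_mult.
      assert (Rabs c * Rabs (g b - Gp) <= Rabs c * eta) by (apply Rmult_le_compat_l; lra).
      assert (Rabs c * Rabs (g a - Gm) <= Rabs c * eta) by (apply Rmult_le_compat_l; lra).
      lra. }
    pose proof (Rle_abs (c * (g b - Gp))). pose proof (Ropp_le_Rabs (c * (g b - Gp))).
    pose proof (Rle_abs (c * (g a - Gm))). pose proof (Ropp_le_Rabs (c * (g a - Gm))).
    apply Rabs_def2 in HJI. apply Rabs_def1; nra.
Qed.

Definition div_shift (z : R) (l : list (R * R)) : list (R * R) :=
  map (fun p => (fst p + z, snd p + z)) l.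

Lemma fine_div_shift (d : R -> R) (z a b : R) (l : list (R * R)) :
  fine_div (fun u => d (u + z)) a b l -> fine_div d (a + z) (b + z) (div_shift z l).
Proof.
  revert a; induction l as [|[t y] l IH]; simpl; intros a H.
  - subst. auto.
  - destruct H as [H1 [H2 [H3 [H4 H5]]]]. do 4 (split; [lra|]). apply IH; auto.
Qed.

Lemma st_sum_shift (H g : R -> R) (z a : R) (l : list (R * R)) :
  st_sum H g (a + z) (div_shift z l) = st_sum (fun t => H (t + z)) (fun t => g (t + z)) a l.
Proof. revert a; induction l as [|[t y] l IH]; simpl; intros a; auto. rewrite IH. reflexivity. Qed.

Lemma HS_int_shift (H g : R -> R) (z I : R) :
  HS_int (fun t => H (t + z)) (fun t => g (t + z)) I -> HS_int H g I.
Proof.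
  intros HI e He. destruct (HI e He) as [M HM].
  pose proof (Rle_abs M). pose proof (Ropp_le_Rabs M).
  pose proof (Rle_abs z). pose proof (Ropp_le_Rabs z).
  exists (Rabs M + Rabs z + 1). intros a b Ha Hb.
  destruct (HM (a + - z) (b + - z) ltac:(lra) ltac:(lra)) as [J [HJ HJI]].
  exists J. split; auto. intros e' He'. destruct (HJ e' He') as [d [Hd Hl]].
  exists (fun u => d (u + - z)). split; [intros; apply Hd|]. intros l Hl'.
  specialize (Hl _ (fine_div_shift d (- z) a b l Hl')).
  rewrite st_sum_shift in Hl.
  replace (fun t => H (t + - z + z)) with H in Hl
    by (apply functional_extensionality; intros; f_equal; ring).
  replace (fun t => g (t + - z + z)) with g in Hl
    by (apply functional_extensionality; intros; f_equal; ring).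
  exact Hl.
Qed.

Lemma in_BC_limits (F : R -> R) :
  in_BC F -> tends_pinf F (lim_pinf F) /\ tends_minf F 0 /\ lim_minf F = 0.
Proof.
  intros [_ [Hm [L Hp]]]. rewrite (lim_pinf_eq _ _ Hp), (lim_minf_eq _ _ Hm). auto.
Qed.

(* Outside a compact interval [F] is close to its limits; inside, Heine applies. *)
Lemma in_BC_unif_cont (F : R -> R) : in_BC F -> unif_cont F.
Proof.
  intros HF. destruct (in_BC_limits F HF) as [Hp [Hm _]]. set (L := lim_pinf F) in *.
  destruct HF as [Hc _]. intros e He.
  destruct (Hm (e / 2)) as [M1 HM1]; [lra|]. destruct (Hp (e / 2)) as [M2 HM2]; [lra|].
  set (A := Rabs M1 + Rabs M2 + 2).
  pose proof (Rle_abs M1). pose proof (Ropp_le_Rabs M1).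
  pose proof (Rle_abs M2). pose proof (Ropp_le_Rabs M2).
  destruct (Heine F (fun c => - A <= c <= A) (compact_P3 (- A) A) (fun x _ => Hc x)
              (mkposreal e He)) as [d0 Hd0].
  simpl in Hd0. pose proof (cond_pos d0).
  exists (Rmin d0 1). split; [apply Rmin_glb_lt; lra|]. intros s t Hst.
  pose proof (Rmin_l d0 1). pose proof (Rmin_r d0 1). apply Rabs_def2 in Hst.
  destruct (Rle_dec s A); destruct (Rle_dec (- A) s);
  destruct (Rle_dec t A); destruct (Rle_dec (- A) t);
  try (left; apply Hd0; [lra | lra | apply Rabs_def1; lra]);
  first
  [ assert (Hs2 : Rabs (F s - L) < e / 2) by (apply HM2; unfold A in *; lra);
    assert (Ht2 : Rabs (F t - L) < e / 2) by (apply HM2; unfold A in *; lra);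
    apply Rabs_def2 in Hs2, Ht2; apply Rabs_le; lra
  | assert (Hs2 : Rabs (F s - 0) < e / 2) by (apply HM1; unfold A in *; lra);
    assert (Ht2 : Rabs (F t - 0) < e / 2) by (apply HM1; unfold A in *; lra);
    apply Rabs_def2 in Hs2, Ht2; apply Rabs_le; lra ].
Qed.

Lemma in_BC_bounded (F : R -> R) : in_BC F -> exists K, forall u, Rabs (F u) <= K.
Proof.
  intros HF. destruct (in_BC_limits F HF) as [Hp [Hm _]]. set (L := lim_pinf F) in *.
  destruct HF as [Hc _].
  destruct (Hm 1 ltac:(lra)) as [M1 HM1]. destruct (Hp 1 ltac:(lra)) as [M2 HM2].
  set (A := Rabs M1 + Rabs M2 + 1).
  pose proof (Rle_abs M1). pose proof (Ropp_le_Rabs M1). pose proof (Rabs_pos M1).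
  pose proof (Rle_abs M2). pose proof (Ropp_le_Rabs M2). pose proof (Rabs_pos M2).
  destruct (continuity_ab_maj F (- A) A ltac:(unfold A; lra) (fun c _ => Hc c)) as [xM [HxM _]].
  destruct (continuity_ab_min F (- A) A ltac:(unfold A; lra) (fun c _ => Hc c)) as [xm [Hxm _]].
  exists (Rabs (F xM) + Rabs (F xm) + Rabs L + 1). intros u.
  pose proof (Rabs_pos (F xM)). pose proof (Rabs_pos (F xm)). pose proof (Rabs_pos L).
  destruct (Rle_dec u A) as [Hu1|Hu1]; destruct (Rle_dec (- A) u) as [Hu2|Hu2].
  - specialize (HxM u ltac:(lra)). specialize (Hxm u ltac:(lra)).
    pose proof (Rle_abs (F xM)). pose proof (Ropp_le_Rabs (F xm)). apply Rabs_le. lra.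
  - specialize (HM1 u ltac:(unfold A in *; lra)). apply Rabs_def2 in HM1. apply Rabs_le. lra.
  - specialize (HM2 u ltac:(unfold A in *; lra)). apply Rabs_def2 in HM2.
    pose proof (Rle_abs L). pose proof (Ropp_le_Rabs L). apply Rabs_le. lra.
  - unfold A in *; lra.
Qed.

Lemma ext_diff_le_alex_norm (F : R -> R) (a b : ERbar) :
  in_BC F -> ERle a b -> Rabs (ext F b - ext F a) <= alex_norm F.
Proof.
  intros HF Hab. destruct (in_BC_bounded F HF) as [K HK].
  destruct (in_BC_limits F HF) as [_ [_ Hl0]].
  assert (Hext : forall e, Rabs (ext F e) <= K + Rabs (lim_pinf F)).
  { pose proof (HK 0). pose proof (Rabs_pos (lim_pinf F)). pose proof (Rabs_pos (F 0)).
    intros [r| |]; simpl; [pose proof (HK r); lra | lra | rewrite Hl0, Rabs_R0; lra]. }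
  unfold alex_norm. apply sup_R_is_lub; [| |eauto].
  - exists 0, MInf, MInf. simpl. split; auto. rewrite Rminus_diag, Rabs_R0. reflexivity.
  - exists (2 * (K + Rabs (lim_pinf F))). intros v [a' [b' [_ ->]]].
    eapply Rle_trans; [apply Rabs_triang|]. rewrite Rabs_Ropp.
    pose proof (Hext a'). pose proof (Hext b'). lra.
Qed.

Lemma sup_norm_le (h : R -> R) (M : R) : (forall x, Rabs (h x) <= M) -> sup_norm h <= M.
Proof.
  intros Hh. unfold sup_norm.
  assert (Hlub : is_lub (fun v => exists x, v = Rabs (h x)) (sup_R (fun v => exists x, v = Rabs (h x)))).
  { apply sup_R_is_lub; [exists (Rabs (h 0)), 0; reflexivity|].
    exists M. intros v [x ->]. apply Hh. }
  apply Hlub. intros v [x ->]. apply Hh.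
Qed.

Lemma conv_eq_of_HS_int (F g : R -> R) (x I : R) : in_BC F ->
  HS_int (fun y => lim_pinf F - F (x - y)) g I -> conv F g x = lim_pinf F * lim_pinf g - I.
Proof.
  intros HF HI. destruct (in_BC_limits F HF) as [_ [Hm _]].
  assert (Hlim : lim_pinf (fun y => lim_pinf F - F (x - y)) = lim_pinf F).
  { apply lim_pinf_eq. intros e He. destruct (tends_minf_reflect F x 0 Hm e He) as [M HM].
    exists M. intros y Hy. specialize (HM y Hy).
    replace (lim_pinf F - F (x - y) - lim_pinf F) with (- (F (x - y) - 0)) by ring.
    rewrite Rabs_Ropp. exact HM. }
  unfold conv, prod_int. rewrite Hlim, (HS_integral_eq _ _ _ HI). reflexivity.
Qed.

Section Convolution.

Variables F g : R -> R.
Hypotheses (hF : in_BC F) (hg : BV g).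

Lemma Rabs_primitive_le_alex_norm (u : R) : Rabs (F u) <= alex_norm F.
Proof.
  pose proof (ext_diff_le_alex_norm F MInf (Fin u) hF I) as H. simpl in H.
  destruct (in_BC_limits F hF) as [_ [_ Hl0]]. rewrite Hl0, Rminus_0_r in H. exact H.
Qed.

Lemma Rabs_lim_sub_primitive_le_alex_norm (u : R) : Rabs (lim_pinf F - F u) <= alex_norm F.
Proof. exact (ext_diff_le_alex_norm F (Fin u) PInf hF I). Qed.

Lemma Rabs_lim_le_alex_norm : Rabs (lim_pinf F) <= alex_norm F.
Proof.
  pose proof (ext_diff_le_alex_norm F MInf PInf hF I) as H. simpl in H.
  destruct (in_BC_limits F hF) as [_ [_ Hl0]]. rewrite Hl0, Rminus_0_r in H. exact H.
Qed.

Lemma conv_integral_exists (x : R) :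
  exists I, HS_int (fun y => lim_pinf F - F (x - y)) g I.
Proof.
  apply (HS_int_exists _ g (alex_norm F) hg).
  - intros e He. destruct (in_BC_unif_cont F hF e He) as [d [Hd HH]].
    exists d; split; auto. intros s t Hst.
    replace (lim_pinf F - F (x - s) - (lim_pinf F - F (x - t))) with (F (x - t) - F (x - s))
      by ring.
    apply HH. replace (x - t - (x - s)) with (s - t) by ring. exact Hst.
  - intros t. apply Rabs_lim_sub_primitive_le_alex_norm.
Qed.

Lemma conv_comm (x : R) : conv F g x = conv_r F g x.
Proof.
  destruct (conv_integral_exists x) as [I HI]. destruct (BV_limits g hg) as [_ Hgm].
  rewrite (conv_eq_of_HS_int F g x I hF HI).
  unfold conv_r, prod_int.
  rewrite (HS_integral_eq _ _ _ (HS_int_reflect F g _ x I hg HI)).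
  rewrite (lim_pinf_eq _ _ (tends_minf_reflect g x _ Hgm)). ring.
Qed.

Lemma Rabs_conv_sub_lim_mul_le (x t0 : R) :
  Rabs (conv F g x - lim_pinf F * g t0) <= alex_norm F * Var g.
Proof.
  destruct (conv_integral_exists x) as [I HI]. rewrite (conv_eq_of_HS_int F g x I hF HI).
  assert (HN0 : 0 <= alex_norm F)
    by (pose proof (Rabs_lim_le_alex_norm); pose proof (Rabs_pos (lim_pinf F)); lra).
  apply (HS_int_split_bound _ g _ I t0 (alex_norm F) (alex_norm F) _ hg HI).
  - intros y _. apply Rabs_lim_sub_primitive_le_alex_norm.
  - intros y _. replace (lim_pinf F - (lim_pinf F - F (x - y))) with (F (x - y)) by ring.
    apply Rabs_primitive_le_alex_norm.
  - intros a1 b1 p1 a2 b2 p2 H1 H2 H3 H4.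
    pose proof (chain_var2_le_Var g hg _ _ _ _ _ _ H1 H2 ltac:(lra)).
    rewrite <- Rmult_plus_distr_l. apply Rmult_le_compat_l; auto.
Qed.

Let inf_abs_g := inf_R (fun v => exists x, v = Rabs (g x)).

Lemma inf_abs_g_spec : 0 <= inf_abs_g /\ (forall x, inf_abs_g <= Rabs (g x)) /\
  (forall e, 0 < e -> exists x, Rabs (g x) < inf_abs_g + e).
Proof.
  destruct (inf_R_spec (fun v => exists x, v = Rabs (g x)) 0) as [H0 [H1 H2]].
  - exists (Rabs (g 0)), 0. reflexivity.
  - intros v [x ->]. apply Rabs_pos.
  - split; [exact H0|]. split; [intros x; apply H1; eauto|].
    intros e He. destruct (H2 e He) as [v [[x ->] Hv]]. eauto.
Qed.

Lemma conv_bounded (x : R) :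
  Rabs (conv F g x) <= Rabs (lim_pinf F) * inf_abs_g + alex_norm F * Var g.
Proof.
  destruct inf_abs_g_spec as [_ [_ Happrox]].
  apply Rle_plus_epsilon. intros e He. pose proof (Rabs_pos (lim_pinf F)).
  destruct (exists_small_factor e (Rabs (lim_pinf F)) He ltac:(lra)) as [eta [Heta Hee]].
  destruct (Happrox eta Heta) as [x0 Hx0].
  pose proof (Rabs_conv_sub_lim_mul_le x x0) as Hd.
  pose proof (Rabs_triang_inv (conv F g x) (lim_pinf F * g x0)).
  assert (Rabs (lim_pinf F) * Rabs (g x0) <= Rabs (lim_pinf F) * (inf_abs_g + eta))
    by (apply Rmult_le_compat_l; lra).
  rewrite Rabs_mult in *. nra.
Qed.

Lemma sup_norm_conv_le :
  sup_norm (conv F g) <= Rabs (lim_pinf F) * inf_abs_g + alex_norm F * Var g.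
Proof. apply sup_norm_le, conv_bounded. Qed.

Lemma conv_bound_le_BV_norm :
  Rabs (lim_pinf F) * inf_abs_g + alex_norm F * Var g <= alex_norm F * BV_norm g.
Proof.
  destruct inf_abs_g_spec as [Hi0 [Hi1 _]]. destruct (BV_limits g hg) as [_ Hgm].
  assert (Hinf : inf_abs_g <= Rabs (lim_minf g)).
  { apply Rle_plus_epsilon. intros e He. destruct (Hgm e He) as [M HM].
    specialize (HM (M - 1) ltac:(lra)). specialize (Hi1 (M - 1)).
    pose proof (Rabs_triang_inv (g (M - 1)) (lim_minf g)). lra. }
  pose proof Rabs_lim_le_alex_norm. pose proof (Rabs_pos (lim_pinf F)).
  unfold BV_norm. nra.
Qed.

Lemma conv_continuous : continuity (conv F g).
Proof.
  intros x e He. pose proof (Var_nonneg g hg).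
  destruct (exists_small_factor e (Var g) He ltac:(lra)) as [w [Hw Hwe]].
  destruct (in_BC_unif_cont F hF w Hw) as [d [Hd HH]].
  exists d. split; [lra|]. intros x0 [_ Hx0]. simpl in *. unfold R_dist in *.
  destruct (conv_integral_exists x) as [I HI]. destruct (conv_integral_exists x0) as [I0 HI0].
  rewrite (conv_eq_of_HS_int F g x I hF HI), (conv_eq_of_HS_int F g x0 I0 hF HI0).
  assert (Hb : Rabs (I0 - I) <= w * Var g).
  { apply (HS_int_diff_bound _ _ g I0 I w hg HI0 HI). intros t.
    replace (lim_pinf F - F (x0 - t) - (lim_pinf F - F (x - t))) with (F (x - t) - F (x0 - t))
      by ring.
    apply HH. replace (x - t - (x0 - t)) with (- (x0 - x)) by ring. rewrite Rabs_Ropp. exact Hx0. }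
  replace (lim_pinf F * lim_pinf g - I0 - (lim_pinf F * lim_pinf g - I)) with (- (I0 - I)) by ring.
  rewrite Rabs_Ropp. lra.
Qed.

Lemma conv_tends_pinf : tends_pinf (conv F g) (lim_pinf g * lim_pinf F).
Proof.
  destruct (in_BC_limits F hF) as [HFp _]. destruct (BV_limits g hg) as [Hgp _].
  set (L := lim_pinf F) in *. set (N := alex_norm F).
  pose proof (Var_nonneg g hg). pose proof (Rabs_pos L).
  assert (HN : Rabs L <= N) by apply Rabs_lim_le_alex_norm.
  intros e He.
  destruct (exists_small_factor e (Var g + N + Rabs L) He ltac:(lra)) as [eta [Heta Hee]].
  destruct (HFp eta Heta) as [M HM].
  destruct (chain_var_tails_small g hg eta Heta) as [T [HT _]].
  destruct (Hgp eta Heta) as [Tg HTg].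
  pose proof (Rle_abs M). pose proof (Rle_abs T). pose proof (Rle_abs Tg).
  pose proof (Rabs_pos T). pose proof (Rabs_pos Tg).
  exists (Rabs M + Rabs T + Rabs Tg + 1). intros x Hx.
  set (t0 := x - Rabs M - 1).
  assert (Hd : Rabs (conv F g x - L * g t0) <= eta * Var g + N * eta).
  { destruct (conv_integral_exists x) as [I HI]. rewrite (conv_eq_of_HS_int F g x I hF HI).
    fold L in HI |- *.
    apply (HS_int_split_bound _ g L I t0 eta N _ hg HI).
    - intros y Hy. rewrite Rabs_minus_sym. left. apply HM. unfold t0 in Hy. lra.
    - intros y _. replace (L - (L - F (x - y))) with (F (x - y)) by ring.
      exact (Rabs_primitive_le_alex_norm _).
    - intros a1 b1 p1 a2 b2 p2 Hc1 Hc2 Hc3 Hc4.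
      pose proof (chain_var_le_Var g hg _ _ _ Hc1).
      pose proof (HT _ _ _ Hc2 ltac:(unfold t0 in Hc4; lra)).
      assert (eta * chain_var g a1 p1 <= eta * Var g) by (apply Rmult_le_compat_l; lra).
      assert (N * chain_var g a2 p2 <= N * eta) by (apply Rmult_le_compat_l; lra).
      lra. }
  specialize (HTg t0 ltac:(unfold t0; lra)).
  assert (Hlg : Rabs (L * (g t0 - lim_pinf g)) <= Rabs L * eta)
    by (rewrite Rabs_mult; apply Rmult_le_compat_l; lra).
  apply Rabs_le_inv in Hd, Hlg. apply Rabs_def1; nra.
Qed.

Lemma conv_tends_minf : tends_minf (conv F g) (lim_minf g * lim_pinf F).
Proof.
  destruct (in_BC_limits F hF) as [_ [HFm _]]. destruct (BV_limits g hg) as [_ Hgm].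
  set (L := lim_pinf F) in *. set (N := alex_norm F).
  pose proof (Var_nonneg g hg). pose proof (Rabs_pos L).
  assert (HN : Rabs L <= N) by apply Rabs_lim_le_alex_norm.
  intros e He.
  destruct (exists_small_factor e (Var g + N + Rabs L) He ltac:(lra)) as [eta [Heta Hee]].
  destruct (HFm eta Heta) as [M HM].
  destruct (chain_var_tails_small g hg eta Heta) as [T [_ HT]].
  destruct (Hgm eta Heta) as [Tg HTg].
  pose proof (Ropp_le_Rabs M). pose proof (Rle_abs T). pose proof (Ropp_le_Rabs Tg).
  pose proof (Rabs_pos T). pose proof (Rabs_pos Tg).
  exists (- (Rabs M + Rabs T + Rabs Tg + 2)). intros x Hx.
  set (t0 := x + Rabs M + 1).
  assert (Hd : Rabs (conv F g x - L * g t0) <= N * eta + eta * Var g).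
  { destruct (conv_integral_exists x) as [I HI]. rewrite (conv_eq_of_HS_int F g x I hF HI).
    fold L in HI |- *.
    apply (HS_int_split_bound _ g L I t0 N eta _ hg HI).
    - intros y _. exact (Rabs_lim_sub_primitive_le_alex_norm _).
    - intros y Hy. replace (L - (L - F (x - y))) with (F (x - y) - 0) by ring.
      left. apply HM. unfold t0 in Hy. lra.
    - intros a1 b1 p1 a2 b2 p2 Hc1 Hc2 Hc3 Hc4.
      pose proof (chain_var_le_Var g hg _ _ _ Hc2).
      pose proof (HT _ _ _ Hc1 ltac:(unfold t0 in Hc3; lra)).
      assert (N * chain_var g a1 p1 <= N * eta) by (apply Rmult_le_compat_l; lra).
      assert (eta * chain_var g a2 p2 <= eta * Var g) by (apply Rmult_le_compat_l; lra).
      lra. }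
  specialize (HTg t0 ltac:(unfold t0; lra)).
  assert (Hlg : Rabs (L * (g t0 - lim_minf g)) <= Rabs L * eta)
    by (rewrite Rabs_mult; apply Rmult_le_compat_l; lra).
  apply Rabs_le_inv in Hd, Hlg. apply Rabs_def1; nra.
Qed.

Lemma conv_translate_primitive (x z : R) :
  conv F g (x - z) = conv (fun y => F (y - z)) g x.
Proof.
  destruct (in_BC_limits F hF) as [HFp _].
  unfold conv. rewrite (lim_pinf_eq _ _ (tends_pinf_shift F z _ HFp)).
  f_equal. apply functional_extensionality. intros y.
  replace (x - z - y) with (x - y - z) by ring. reflexivity.
Qed.

Lemma conv_translate_integrator (x z : R) :
  conv (fun y => F (y - z)) g x = conv F (fun y => g (y - z)) x.
Proof.
  destruct (BV_limits g hg) as [Hgp _].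
  rewrite <- conv_translate_primitive.
  destruct (conv_integral_exists (x - z)) as [I HI].
  assert (HI' : HS_int (fun y => lim_pinf F - F (x - y)) (fun y => g (y - z)) I).
  { apply (HS_int_shift _ _ z).
    replace (fun t => lim_pinf F - F (x - (t + z))) with (fun y => lim_pinf F - F (x - z - y))
      by (apply functional_extensionality; intros t;
          replace (x - (t + z)) with (x - z - t) by ring; reflexivity).
    replace (fun t => g (t + z - z)) with g
      by (apply functional_extensionality; intros; f_equal; ring).
    exact HI. }
  rewrite (conv_eq_of_HS_int F g (x - z) I hF HI), (conv_eq_of_HS_int F _ x I hF HI').
  rewrite (lim_pinf_eq _ _ (tends_pinf_shift g z _ Hgp)). reflexivity.
Qed.

End Convolution.

Theorem theorem2p1 (F g : R -> R) (hF : in_BC F) (hg : BV g) :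
  (* (a) *)
  (forall x, exists I, HS_int (fun y => lim_pinf F - F (x - y)) g I) /\
  (* (b) *)
  (forall x, conv F g x = conv_r F g x) /\
  (* (c) *)
  (sup_norm (conv F g)
     <= Rabs (lim_pinf F - lim_minf F) * inf_R (fun v => exists x, v = Rabs (g x))
        + alex_norm F * Var g /\
   Rabs (lim_pinf F - lim_minf F) * inf_R (fun v => exists x, v = Rabs (g x))
        + alex_norm F * Var g <= alex_norm F * BV_norm g) /\
  (* (d) *)
  (continuity (conv F g) /\
   tends_pinf (conv F g) (lim_pinf g * (lim_pinf F - lim_minf F)) /\
   tends_minf (conv F g) (lim_minf g * (lim_pinf F - lim_minf F))) /\
  (* (f) *)
  (forall x z,
     conv F g (x - z) = conv (fun y => F (y - z)) g x /\
     conv (fun y => F (y - z)) g x = conv F (fun y => g (y - z)) x).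
Proof.
  destruct (in_BC_limits F hF) as [_ [_ HFm]]. rewrite HFm, Rminus_0_r.
  split; [exact (conv_integral_exists F g hF hg)|].
  split; [exact (conv_comm F g hF hg)|].
  split; [split; [exact (sup_norm_conv_le F g hF hg) | exact (conv_bound_le_BV_norm F g hF hg)]|].
  split; [split; [|split]|].
  - exact (conv_continuous F g hF hg).
  - exact (conv_tends_pinf F g hF hg).
  - exact (conv_tends_minf F g hF hg).
  - intros x z. split.
    + exact (conv_translate_primitive F g hF x z).
    + exact (conv_translate_integrator F g hF hg x z).
Qed.
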